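(* Let $G=\langle V,E_s\rangle$ be an undirected graph with $V=\{1,\dots,n\}$, where edges are treated as bidirected (so $(i,j)\in E_s$ iff $(j,i)\in E_s$, and there are no loops). Let $\mu_{ij}=\mu_{ji}\ge 0$ ($i\neq j$) be requirements, and let $\delta=(\delta_1,\dots,\delta_n)$ be a sequence of positive integers with $\sum_i\delta_i=2(n-1)$ such that $G$ has at least one spanning tree in which every vertex $i$ has degree $\delta_i$ (call such spanning trees admissible). Let $m=|\{i:\delta_i>1\}|$ and $L=m+2$. For a spanning tree $T$ let $C_A(T)=\sum_{i\neq j}\mu_{ij}d_T(i,j)$, where $d_T(i,j)$ is the number of edges of the path from $i$ to $j$ in $T$; an admissible tree minimizing $C_A$ is called optimal. Consider the problem (relaxed F2Q) in variables $x_{ij}=x_{ji}\in\{0,1\}$ for $(i,j)\in E_s$ and $w^{(\ell)}_{ij}=w^{(\ell)}_{ji}\in[0,1]$ for $i\neq j\in V$, $\ell\in\{1,\dots,L\}$: minimize $\displaystyle\sum_{i,j=1,\,i\neq j}^n \mu_{ij}\Big(L-\sum_{\ell=1}^{L-1} w^{(\ell)}_{ij}\Big)$ subject to - $w^{(1)}_{ij}=x_{ij}$ for all $(i,j)\in E_s$; - $w^{(1)}_{ij}=0$ for all $i<j$ with $(i,j)\notin E_s$; - $w^{(\ell)}_{ij}\le x_{ij}+\sum_{k\neq j:(i,k)\in E_s}x_{ik}w^{(\ell-1)}_{kj}$ for all $(i,j)\in E_s$, $i<j$, $\ell\in\{2,\dots,L\}$; - $w^{(\ell)}_{ij}\le \sum_{k\neq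 j:(i,k)\in E_s}x_{ik}w^{(\ell-1)}_{kj}$ for all $i<j$ with $(i,j)\notin E_s$, $\ell\in\{2,\dots,L\}$; - $w^{(L)}_{ij}=1$ for all $i<j$; - $\sum_{j:(i,j)\in E_s}x_{ij}=\delta_i$ for all $i\in V$. Then there exists an optimal solution $(x^*,w^* )$ of this problem such that the edges $\{(i,j)\in E_s: x^*_{ij}=1\}$ form an optimal tree $T^*$ and the optimal objective value equals $C_A(T^* )$.
   Context: The variables $w^{(\ell)}_{ij}$ are intended to indicate whether vertices $i$ and $j$ are joined by a path of length at most $\ell$ in the selected tree; in the unrelaxed problem they are binary, here they are relaxed to $[0,1]$ while $x$ stays binary. *)

From mathcomp Require Import all_boot all_order all_algebra.
Set Implicit Arguments. Unset Strict Implicit. Unset Printing Implicit Defensive.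
Import Order.TTheory GRing.Theory Num.Theory.
Local Open Scope ring_scope.

Section Defs.
Variable n : nat.

Fixpoint reach (t : rel 'I_n) (k : nat) (i j : 'I_n) : bool :=
  match k with
  | 0 => i == j
  | k'.+1 => [exists v, t i v && reach t k' v j]
  end.

(* d_T(i,j): the least number of edges of a walk from i to j in t
   (in a tree: the number of edges of the unique i-j path).
   Returns n if j is unreachable from i (never happens in a spanning tree). *)
Definition tdist (t : rel 'I_n) (i j : 'I_n) : nat :=
  find (fun k => reach t k i j) (iota 0 n).

(* t is a spanning tree of the graph e: t is a symmetric subrelation of e,
   connected, with exactly n-1 (undirected) edges, i.e. 2(n-1) ordered pairs. *)
Definition is_spanning_tree (e t : rel 'I_n) : Prop :=
  [/\ forall i j, t i j -> e i j,
      symmetric t,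
      forall i j, connect t i j
    & #|[set p : 'I_n * 'I_n | t p.1 p.2]| = (2 * (n - 1))%N].

Definition tdeg (t : rel 'I_n) (i : 'I_n) : nat := #|[set j | t i j]|.

Definition admissible (e : rel 'I_n) (delta : 'I_n -> nat) (t : rel 'I_n) : Prop :=
  is_spanning_tree e t /\ forall i, tdeg t i = delta i.

Variable R : realFieldType.

Definition CA (mu : 'I_n -> 'I_n -> R) (t : rel 'I_n) : R :=
  \sum_(i : 'I_n) \sum_(j : 'I_n | i != j) mu i j * (tdist t i j)%:R.

Definition optimal_tree (e : rel 'I_n) (delta : 'I_n -> nat)
    (mu : 'I_n -> 'I_n -> R) (t : rel 'I_n) : Prop :=
  admissible e delta t /\
  forall t', admissible e delta t' -> CA mu t <= CA mu t'.

(* Feasibility for relaxed F2Q with L levels.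
   x i j is only meaningful for edges (i,j) of e; w l i j for i <> j, 1 <= l <= L. *)
Definition F2Q_feasible (e : rel 'I_n) (delta : 'I_n -> nat) (L : nat)
    (x : 'I_n -> 'I_n -> R) (w : nat -> 'I_n -> 'I_n -> R) : Prop :=
  (
   (forall i j, e i j -> (x i j = 0 \/ x i j = 1) /\ x i j = x j i) /\
   (forall l i j, (1 <= l <= L)%N -> i != j ->
        w l i j = w l j i /\ 0 <= w l i j <= 1) /\
   (forall i j, e i j -> w 1%N i j = x i j) /\
   (forall i j : 'I_n, (i < j)%N -> ~~ e i j -> w 1%N i j = 0) /\
   (forall l (i j : 'I_n), (2 <= l <= L)%N -> e i j -> (i < j)%N ->
        w l i j <= x i j + \sum_(k : 'I_n | e i k && (k != j)) x i k * w l.-1 k j) /\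
   (forall l (i j : 'I_n), (2 <= l <= L)%N -> ~~ e i j -> (i < j)%N ->
        w l i j <= \sum_(k : 'I_n | e i k && (k != j)) x i k * w l.-1 k j) /\
   (forall i j : 'I_n, (i < j)%N -> w L i j = 1) /\
   (forall i, \sum_(j : 'I_n | e i j) x i j = (delta i)%:R)).

Definition F2Q_obj (mu : 'I_n -> 'I_n -> R) (L : nat)
    (w : nat -> 'I_n -> 'I_n -> R) : R :=
  \sum_(i : 'I_n) \sum_(j : 'I_n | i != j)
     mu i j * (L%:R - \sum_(1 <= l < L) w l i j).

Definition x_edges (e : rel 'I_n) (x : 'I_n -> 'I_n -> R) : rel 'I_n :=
  fun i j => e i j && (x i j == 1).

End Defs.

(* Every feasible (x, w) selects an admissible spanning tree T: by the level
   constraints, w^(l)_ij can only be positive if x selects a walk of at most l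
   edges from i to j, so w^(l)_ij = 0 for l < d_T(i,j).  Hence w^(L) = 1 makes T
   connected, the degree constraints count its edges, and since w <= 1 each
   term L - sum_l w^(l)_ij of the objective is at least d_T(i,j): the objective
   dominates C_A(T), hence C_A of an optimal tree T0.  Conversely the indicator
   x of T0 with w^(l)_ij = [d_T0(i,j) <= l] is feasible and attains C_A(T0);
   here L is large enough because the interior vertices of a path in T0 have
   degree > 1, so d_T0(i,j) <= m + 1. *)

From mathcomp Require Import all_boot all_order all_algebra.
From Stdlib Require Import FunctionalExtensionality ClassicalEpsilon.
Import Order.TTheory GRing.Theory Num.Theory.
Local Open Scope ring_scope.

Set Implicit Arguments.
Unset Strict Implicit.
Unset Printing Implicit Defensive.

Section Walks.
Variables (n : nat) (t : rel 'I_n).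
Implicit Types (i j v : 'I_n) (k l : nat).

Lemma reachSr k i j : reach t k.+1 i j = [exists v, reach t k i v && t v j].
Proof.
elim: k i j => [|k IHk] i j.
  apply/existsP/existsP => [[v /andP[tiv /eqP <-]]|[v /andP[/eqP <- tij]]].
    by exists i; rewrite /= eqxx.
  by exists j; rewrite /= tij eqxx.
have -> : reach t k.+2 i j = [exists v, t i v && reach t k.+1 v j] by [].
apply/existsP/existsP => [[v /andP[tiv]]|[u /andP[/existsP[v /andP[tiv rvu]] tuj]]].
  rewrite IHk => /existsP[u /andP[rvu tuj]].
  by exists u; rewrite tuj andbT; apply/existsP; exists v; rewrite tiv.
by exists v; rewrite tiv IHk; apply/existsP; exists u; apply/andP.
Qed.

Lemma reach_sym k i j : symmetric t -> reach t k i j = reach t k j i.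
Proof.
move=> st; elim: k i j => [|k IHk] i j; first by rewrite /= eq_sym.
by rewrite reachSr; apply: eq_existsb => v; rewrite IHk st andbC.
Qed.

Lemma reach_connect k i j : reach t k i j -> connect t i j.
Proof.
elim: k i => [|k IHk] i /=; first by move/eqP->.
by case/existsP=> v /andP[tiv /IHk]; apply: connect_trans (connect1 tiv).
Qed.

Lemma path_reach i p : path t i p -> reach t (size p) i (last i p).
Proof.
elim: p i => [|v p IHp] i /=; first by rewrite eqxx.
by case/andP=> tiv /IHp rv; apply/existsP; exists v; rewrite tiv.
Qed.

Lemma connect_upath i j : connect t i j ->
  exists p, [/\ path t i p, last i p = j, uniq (i :: p) & (size p < n)%N].
Proof.
case/connectP=> p tp ->; case/shortenP: tp => q tq uq _.
exists q; split=> //.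
by have := max_card (mem (i :: q)); rewrite card_ord (card_uniqP uq).
Qed.

Lemma reach1 i j : reach t 1 i j = t i j.
Proof.
apply/existsP/idP => [[v /andP[tiv /eqP <-]] //|tij].
by exists j; rewrite tij /=.
Qed.

Lemma tdist_min k i j : reach t k i j -> (tdist t i j <= k)%N.
Proof.
move=> rk; have [kn|nk] := ltnP k n; last first.
  by apply: leq_trans nk; rewrite -[X in (_ <= X)%N](size_iota 0) find_size.
rewrite leqNgt; apply/negP => /(before_find 0).
by rewrite nth_iota // add0n rk.
Qed.

Lemma reach_tdist_lt i j : (tdist t i j < n)%N -> reach t (tdist t i j) i j.
Proof.
move=> dn; have := @nth_find _ 0 (fun k => reach t k i j) (iota 0 n).
by rewrite has_find size_iota => /(_ dn); rewrite nth_iota // add0n.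
Qed.

Lemma reach_tdist i j : connect t i j -> reach t (tdist t i j) i j.
Proof.
case/connect_upath=> p [tp <- _ pn]; apply: reach_tdist_lt.
exact: leq_ltn_trans (tdist_min (path_reach tp)) pn.
Qed.

Lemma tdist_gt0 i j : i != j -> (0 < tdist t i j)%N.
Proof.
move=> ij; rewrite lt0n; apply/eqP => d0.
have /reach_tdist_lt : (tdist t i j < n)%N by rewrite d0 (leq_ltn_trans _ (ltn_ord i)).
by rewrite d0 /= (negbTE ij).
Qed.

Lemma tdist_sym i j : symmetric t -> tdist t i j = tdist t j i.
Proof. by move=> st; apply: eq_find => k; apply: reach_sym. Qed.

Lemma tdist_first_step l i j : connect t i j -> i != j -> (tdist t i j <= l)%N ->
  t i j \/ exists2 v, t i v && (v != j) & (tdist t v j <= l.-1)%N.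
Proof.
move=> cij ij; move: (tdist_gt0 ij) (reach_tdist cij).
case: (tdist t i j) => // d _ /existsP[v /andP[tiv rvj]] dl.
have [<-|vj] := eqVneq v j; [by left | right; exists v; first by rewrite tiv].
by apply: leq_trans (tdist_min rvj) _; case: l dl.
Qed.

Lemma tdist_le1 i j : connect t i j -> i != j -> (tdist t i j <= 1)%N = t i j.
Proof.
move=> cij ij; apply/idP/idP => [|tij].
  case/(tdist_first_step cij ij) => // -[v /andP[_ vj]].
  by rewrite leqn0 => /eqP d0; have := tdist_gt0 vj; rewrite d0.
by apply: tdist_min; rewrite reach1.
Qed.

Lemma path_internal_deg i p v : symmetric t -> path t i p -> uniq (i :: p) ->
  v \in p -> v != last i p -> (1 < tdeg t v)%N.
Proof.
move=> st + + vp; case/splitPr: vp => p1 [|w p2] tp up vl.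
  by rewrite last_cat /= eqxx in vl.
rewrite cat_path /= in tp; case/and3P: tp => _ tpv /andP[tvw _].
have uw : last i p1 != w.
  move: up; rewrite -cat_cons cat_uniq => /and3P[_ /hasPn/(_ w) + _].
  rewrite !inE eqxx orbT => /(_ isT); apply: contra => /eqP <-.
  exact: mem_last.
apply: leq_trans (_ : (1 < #|[set last i p1; w]|)%N) _; first by rewrite cards2 uw.
apply/subset_leq_card/subsetP => u.
by rewrite !inE => /orP[]/eqP->; rewrite ?tvw // st.
Qed.

Lemma tdist_le_internal i j : symmetric t -> connect t i j ->
  (tdist t i j <= #|[set v | (1 < tdeg t v)%N]|.+1)%N.
Proof.
move=> st; case/connect_upath => p [tp <- up _].
apply: leq_trans (tdist_min (path_reach tp)) _.
case: p tp up => [//|a p] tp up; rewrite /= ltnS.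
have /card_uniqP sz : uniq (a :: p) by case/andP: up.
have := cardD1 (last a p) (mem (a :: p)); rewrite sz mem_last add1n => -[->].
apply/subset_leq_card/subsetP => v /andP[vl vp]; rewrite inE.
exact: path_internal_deg st tp up vp vl.
Qed.

End Walks.

Lemma card_rel_pairs n (t : rel 'I_n) :
  #|[set p : 'I_n * 'I_n | t p.1 p.2]| = (\sum_i tdeg t i)%N.
Proof.
rewrite -(sum1dep_card (fun p : 'I_n * 'I_n => t p.1 p.2)).
rewrite [RHS](eq_bigr (fun i => \sum_(j | t i j) 1)%N) => [|i _].
  by rewrite pair_big_dep.
by rewrite sum1dep_card.
Qed.

Lemma sum_step (R : numDomainType) (d L : nat) : (0 < d <= L)%N ->
  L%:R - \sum_(1 <= l < L) ((d <= l)%N%:R : R) = d%:R.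
Proof.
case/andP=> d_gt0 dL; rewrite -natr_sum (big_cat_nat d_gt0 dL) /=.
rewrite big_nat_cond big1 => [|l /andP[/andP[_ ld] _]]; last by rewrite leqNgt ld.
rewrite add0n (eq_big_nat _ _ (F2 := fun => 1%N)) => [|l /andP[dl _]]; last by rewrite dl.
by rewrite sum_nat_const_nat muln1 natrB // opprB addrC subrK.
Qed.

Lemma rel_minimizer (R : realDomainType) (I : finType) (P : rel I -> Prop)
    (f : rel I -> R) :
  (exists r, P r) -> exists2 r, P r & forall r', P r' -> f r <= f r'.
Proof.
pose rel_of (S : {set I * I}) : rel I := fun a b => (a, b) \in S.
have rel_ofK r : rel_of [set p | r p.1 p.2] = r.
  by do 2!apply: functional_extensionality => ?; rewrite /rel_of inE.
pose Pb S := if excluded_middle_informative (P (rel_of S)) then true else false.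
have PbP S : reflect (P (rel_of S)) (Pb S).
  by rewrite /Pb; case: excluded_middle_informative => h; constructor.
case=> r0 Pr0; have /PbP PS0 : P (rel_of [set p | r0 p.1 p.2]) by rewrite rel_ofK.
case: (arg_minP (fun S => f (rel_of S)) PS0) => S /PbP PS minS.
exists (rel_of S) => // r' Pr'; rewrite -(rel_ofK r'); apply/minS/PbP.
by rewrite rel_ofK.
Qed.

Lemma x_edges_sym (R : realFieldType) n (e : rel 'I_n) (x : 'I_n -> 'I_n -> R) :
  symmetric e -> (forall i j, e i j -> x i j = x j i) -> symmetric (x_edges e x).
Proof.
by move=> se xs i j; rewrite /x_edges se; case eji: (e j i) => //=; rewrite xs // se.
Qed.

Lemma sum_x_edges (R : realFieldType) n (e : rel 'I_n) (x : 'I_n -> 'I_n -> R) i :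
  (forall j, e i j -> x i j = 0 \/ x i j = 1) ->
  \sum_(j | e i j) x i j = (tdeg (x_edges e x) i)%:R.
Proof.
move=> x01; rewrite /tdeg -sum1dep_card natr_sum (bigID (fun j => x i j == 1)) /=.
rewrite [X in _ + X]big1 ?addr0 => [|j /andP[/x01[]// -> ]]; last by rewrite eqxx.
by apply: eq_bigr => j /andP[_ /eqP].
Qed.

Section FeasibleSolutions.
Variables (R : realFieldType) (n : nat) (e : rel 'I_n) (delta : 'I_n -> nat).
Variables (L : nat) (x : 'I_n -> 'I_n -> R) (w : nat -> 'I_n -> 'I_n -> R).
Hypotheses (e_sym : symmetric e) (L_gt0 : (0 < L)%N).
Hypothesis feas : F2Q_feasible e delta L x w.
Implicit Types (i j k : 'I_n) (l : nat).
Local Notation T := (x_edges e x).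

Lemma feasible_x_bin i j : e i j -> x i j = 0 \/ x i j = 1.
Proof. by case: feas => /(_ i j) hx _ /hx[]. Qed.

Lemma feasible_edge i j : e i j -> x i j != 0 -> T i j.
Proof.
by move=> eij; rewrite /x_edges eij; case: (feasible_x_bin eij) => ->; rewrite eqxx.
Qed.

Lemma feasible_x_edges_sym : symmetric T.
Proof. by apply: x_edges_sym => // i j; case: feas => /(_ i j) hx _ /hx[]. Qed.

Lemma feasible_w_sym l i j : (1 <= l <= L)%N -> i != j -> w l i j = w l j i.
Proof. by case: feas => _ [/(_ l i j) hw _] /hw/[apply]-[]. Qed.

Lemma feasible_w_ge0 l i j : (1 <= l <= L)%N -> i != j -> 0 <= w l i j.
Proof. by case: feas => _ [/(_ l i j) hw _] /hw/[apply]-[_ /andP[]]. Qed.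

Lemma feasible_w_le1 l i j : (1 <= l <= L)%N -> i != j -> w l i j <= 1.
Proof. by case: feas => _ [/(_ l i j) hw _] /hw/[apply]-[_ /andP[]]. Qed.

Lemma feasible_wL i j : i != j -> w L i j = 1.
Proof.
case: feas => _ [_ [_ [_ [_ [_ [hL _]]]]]] ij.
have [lt|gt|/val_inj eq] := ltngtP i j; first exact: hL.
  by rewrite feasible_w_sym ?L_gt0 ?leqnn // hL.
by rewrite eq eqxx in ij.
Qed.

Lemma feasible_w1 i j : (i < j)%N -> w 1 i j = if e i j then x i j else 0.
Proof.
by case: feas => _ [_ [h1 [h1n _]]] ij; case: ifP => [/h1|/negbT/(h1n _ _ ij)].
Qed.

Lemma feasible_w_le_next l i j : (2 <= l <= L)%N -> (i < j)%N ->
  w l i j <= (if e i j then x i j else 0) +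
             \sum_(k | e i k && (k != j)) x i k * w l.-1 k j.
Proof.
case: feas => _ [_ [_ [_ [hle [hln _]]]]] hl ij.
by case: ifP => [/(hle _ _ _ hl)|/negbT/(hln _ _ _ hl)]; rewrite ?add0r; apply.
Qed.

Lemma feasible_walk l i j : (1 <= l <= L)%N -> i != j -> w l i j != 0 ->
  exists2 k, (k <= l)%N & reach T k i j.
Proof.
elim: l i j => [|l IHl] i j hl //.
wlog ij : i j / (i < j)%N => [wlog_ij|] ne_ij.
  have [lt|gt|/val_inj eq] := ltngtP i j; first exact: wlog_ij.
    rewrite feasible_w_sym // => /(wlog_ij j i gt); rewrite eq_sym => /(_ ne_ij).
    by case=> k kl r; exists k; rewrite // reach_sym //; apply: feasible_x_edges_sym.
  by rewrite eq eqxx in ne_ij.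
move=> nz; have w_gt0 : 0 < w l.+1 i j by rewrite lt_def nz feasible_w_ge0.
have edge : e i j -> x i j != 0 -> exists2 k, (k <= l.+1)%N & reach T k i j.
  by move=> eij xij; exists 1%N; rewrite // reach1 feasible_edge.
case: l IHl hl nz w_gt0 edge => [|l] IHl hl nz w_gt0 edge.
  by move: nz; rewrite feasible_w1 //; case: ifP => [eij|]; [apply: edge|rewrite eqxx].
have [k /and3P[eik kj nzk]|none] :=
  pickP (fun k => [&& e i k, k != j & x i k * w l.+1 k j != 0]).
  rewrite mulf_eq0 negb_or in nzk; case/andP: nzk => xik wkj.
  have [|d dl rd] := IHl k j _ kj wkj; first by case/andP: hl => _ /ltnW.
  by exists d.+1 => //; apply/existsP; exists k; rewrite feasible_edge.
have := @feasible_w_le_next l.+2 i j hl ij.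
rewrite big1 ?addr0 => [|k /andP[eik kj]]; last first.
  by apply/eqP; have := none k; rewrite eik kj => /negbFE.
case: ifP => [eij wx|_]; last by rewrite leNgt w_gt0.
by apply: edge => //; rewrite gt_eqF // (lt_le_trans w_gt0 wx).
Qed.

Lemma feasible_tdist_le l i j : (1 <= l <= L)%N -> i != j -> w l i j != 0 ->
  (tdist T i j <= l)%N.
Proof. by move=> hl ij /(feasible_walk hl ij)[k kl /tdist_min/leq_trans]; apply. Qed.

Lemma feasible_w_le_step l i j : (1 <= l <= L)%N -> i != j ->
  w l i j <= (tdist T i j <= l)%N%:R.
Proof.
move=> hl ij; have [_|ld] := leqP; first exact: feasible_w_le1.
suff -> : w l i j = 0 by [].
by apply/eqP; apply: contraTT ld => /(feasible_tdist_le hl ij); rewrite -leqNgt.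
Qed.

Lemma feasible_reach_L i j : i != j -> exists2 k, (k <= L)%N & reach T k i j.
Proof.
move=> ij; apply: (feasible_walk _ ij); first by rewrite L_gt0 leqnn.
by rewrite feasible_wL // oner_neq0.
Qed.

Lemma feasible_tdist_le_L i j : i != j -> (tdist T i j <= L)%N.
Proof. by case/feasible_reach_L=> k kL /tdist_min/leq_trans; apply. Qed.

Lemma feasible_admissible :
  (\sum_i delta i)%N = (2 * (n - 1))%N -> admissible e delta T.
Proof.
move=> delta_sum.
have deg i : tdeg T i = delta i.
  apply/eqP; rewrite -(eqr_nat R) -sum_x_edges => [|j]; last exact: feasible_x_bin.
  by case: feas => _ [_ [_ [_ [_ [_ [_ ->]]]]]].
split=> //; split=> [i j /andP[]//||i j|].
- exact: feasible_x_edges_sym.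
- have [<-|/feasible_reach_L[k _ /reach_connect //]] := eqVneq i j.
  exact: connect0.
- by rewrite card_rel_pairs -delta_sum; apply: eq_bigr.
Qed.

Lemma CA_le_F2Q_obj (mu : 'I_n -> 'I_n -> R) :
  (forall i j, i != j -> 0 <= mu i j) -> CA mu T <= F2Q_obj mu L w.
Proof.
move=> mu_ge0; apply: ler_sum => i _; apply: ler_sum => j ij.
rewrite ler_wpM2l ?mu_ge0 // -(sum_step R (d := tdist T i j) (L := L)).
  apply: lerB (lexx _) _; apply: ler_sum_nat => l /andP[l_ge1 lL].
  by apply: feasible_w_le_step; rewrite // l_ge1 ltnW.
by rewrite tdist_gt0 // feasible_tdist_le_L.
Qed.

End FeasibleSolutions.

Section TreeSolution.
Variables (R : realFieldType) (n : nat) (e t : rel 'I_n).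
Hypotheses (e_irr : irreflexive e) (t_sub : forall i j, t i j -> e i j).
Hypotheses (t_sym : symmetric t) (t_conn : forall i j, connect t i j).
Implicit Types (i j k : 'I_n) (l : nat).

Definition tree_x i j : R := (t i j)%:R.
Definition tree_w l i j : R := (tdist t i j <= l)%N%:R.

Lemma x_edges_tree : x_edges e tree_x = t.
Proof.
do 2!apply: functional_extensionality => ?.
rewrite /x_edges /tree_x pnatr_eq1.
by case: (boolP (t _ _)) => [/t_sub ->|]; rewrite ?andbF.
Qed.

Lemma tree_w_le_next l i j : i != j ->
  tree_w l i j <= (t i j)%:R + \sum_(k | e i k && (k != j)) tree_x i k * tree_w l.-1 k j.
Proof.
move=> ij; have sum_ge0 (P : pred 'I_n) :
    0 <= \sum_(k | P k) tree_x i k * tree_w l.-1 k j.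
  by apply: sumr_ge0 => k _; rewrite mulr_ge0 ?ler0n.
rewrite {1}/tree_w; case: leqP => [dl|_]; last by rewrite addr_ge0 ?ler0n.
case: (tdist_first_step (t_conn i j) ij dl) => [-> | [v /andP[tiv vj] dv]].
  by rewrite lerDl.
rewrite (bigD1 v) /=; last by rewrite t_sub.
have -> : tree_x i v * tree_w l.-1 v j = 1 by rewrite /tree_x /tree_w tiv dv mul1r.
by rewrite addrCA lerDl addr_ge0 ?ler0n.
Qed.

Lemma tree_feasible delta L : (forall i, tdeg t i = delta i) ->
  (forall i j, tdist t i j <= L)%N -> F2Q_feasible e delta L tree_x tree_w.
Proof.
move=> deg diam; have e_neq i j : e i j -> i != j.
  by apply: contraTneq => ->; rewrite e_irr.
have lt_neq i j : (i < j)%N -> i != j by move=> ij; rewrite -val_eqE ltn_eqF.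
have w1 i j : i != j -> tree_w 1 i j = tree_x i j by move=> ij; rewrite /tree_w tdist_le1.
split; [|split; [|split; [|split; [|split; [|split; [|split]]]]]].
- by move=> i j _; rewrite /tree_x t_sym; split=> //; case: (t j i); [right|left].
- by move=> l i j _ _; rewrite /tree_w tdist_sym // ler0n lern1 leq_b1.
- by move=> i j /e_neq/w1.
- move=> i j ij eij; rewrite w1 ?lt_neq // /tree_x.
  by case: (boolP (t i j)) eij => [/t_sub ->|].
- by move=> l i j _ /e_neq ij _; apply: tree_w_le_next.
- move=> l i j _ eij ij; have := tree_w_le_next l (lt_neq _ _ ij).
  by case: (boolP (t i j)) eij => [/t_sub -> //|_ _]; rewrite add0r.
- by move=> i j _; rewrite /tree_w diam.
- move=> i; rewrite sum_x_edges => [|j _]; first by rewrite x_edges_tree deg.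
  by rewrite /tree_x; case: (t i j); [right|left].
Qed.

Lemma tree_F2Q_obj (mu : 'I_n -> 'I_n -> R) L : (forall i j, tdist t i j <= L)%N ->
  F2Q_obj mu L tree_w = CA mu t.
Proof.
move=> diam; apply: eq_bigr => i _; apply: eq_bigr => j ij.
by rewrite /tree_w sum_step // tdist_gt0 ?diam.
Qed.

End TreeSolution.

Theorem proposition2 (R : realFieldType) (n : nat) (e : rel 'I_n)
    (mu : 'I_n -> 'I_n -> R) (delta : 'I_n -> nat) :
  symmetric e -> irreflexive e ->
  (forall i j, i != j -> mu i j = mu j i) ->
  (forall i j, i != j -> 0 <= mu i j) ->
  (forall i, (0 < delta i)%N) ->
  (\sum_(i : 'I_n) delta i)%N = (2 * (n - 1))%N ->
  (exists t : rel 'I_n, admissible e delta t) ->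
  let L := (#|[set i : 'I_n | (1 < delta i)%N]| + 2)%N in
  exists (x : 'I_n -> 'I_n -> R) (w : nat -> 'I_n -> 'I_n -> R),
    [/\ F2Q_feasible e delta L x w,
        (forall x' w', F2Q_feasible e delta L x' w' ->
           F2Q_obj mu L w <= F2Q_obj mu L w'),
        optimal_tree e delta mu (x_edges e x)
      & F2Q_obj mu L w = CA mu (x_edges e x)].
Proof.
move=> e_sym e_irr _ mu_ge0 _ delta_sum ex_adm L.
have [t adm_t min_t] := rel_minimizer (CA mu) ex_adm.
have [[t_sub t_sym t_conn _] deg_t] := adm_t.
have diam i j : (tdist t i j <= L)%N.
  apply: leq_trans (tdist_le_internal t_sym (t_conn i j)) _.
  have -> : [set v | (1 < tdeg t v)%N] = [set i | (1 < delta i)%N].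
    by apply/setP => v; rewrite !inE deg_t.
  by rewrite /L addn2 ltnW.
exists (tree_x R t), (tree_w R t); rewrite x_edges_tree //.
have obj_t := tree_F2Q_obj mu diam.
split=> //; first exact: tree_feasible.
move=> x' w' feas'; rewrite obj_t.
have L_gt0 : (0 < L)%N by rewrite /L addn2.
apply: le_trans (min_t _ (feasible_admissible e_sym L_gt0 feas' delta_sum)) _.
exact: (CA_le_F2Q_obj e_sym L_gt0 feas' mu_ge0).
Qed.
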